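(* Let $\theta_0\in\mathbb{R}^d$, source task vectors $\tau_1,\dots,\tau_T\in\mathbb{R}^d$ and a target task vector $\tau_{\mathrm{tar}}\in\mathbb{R}^d$ with $\|\tau_i\|^2\le C$ for all $i$ and $\|\tau_{\mathrm{tar}}\|^2\le C$, where $C>0$. Let $\theta_{\mathrm{tar}}=\theta_0+\tau_{\mathrm{tar}}$ and let $\mathcal{L}_{\mathrm{tar}}:\mathbb{R}^d\to\mathbb{R}$ be differentiable with $\nabla\mathcal{L}_{\mathrm{tar}}(\theta_{\mathrm{tar}})=0$, and suppose there is $L_{\mathrm{tar}}\ge 0$ such that for all $\theta$ with $\|\theta-\theta_{\mathrm{tar}}\|\le 2\sqrt{C}$, $\mathcal{L}_{\mathrm{tar}}(\theta)-\mathcal{L}_{\mathrm{tar}}(\theta_{\mathrm{tar}})\le\langle\theta-\theta_{\mathrm{tar}},\nabla\mathcal{L}_{\mathrm{tar}}(\theta_{\mathrm{tar}})\rangle+\frac{L_{\mathrm{tar}}}{2}\|\theta-\theta_{\mathrm{tar}}\|^2$. Assume $\langle\tau_{\mathrm{tar}},\tau_i\rangle\ge 0$ for all $i\in[T]$; let $i^\star\in\arg\max_{i\in[T]}\langle\tau_{\mathrm{tar}},\tau_i\rangle$ and suppose $\langle\tau_{\mathrm{tar}},\tau_{i^\star}\rangle\ge\gamma C$ for some $0<\gamma\le 1$. Let $\mathbf{W}_e\in\mathbb{R}^{T\times M}$ have every column in $\Delta^{T-1}$, let $B_m=\sum_{j=1}^T\mathbf{W}_e[j,m]\tau_j$, and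 suppose there is $m^\star\in[M]$ with $\mathbf{W}_e[i^\star,m^\star]\ge\rho$ for some $\rho\in(0,1]$. Then there exists $\alpha\in\Delta^{M-1}$ such that $\theta^M_{\mathrm{Add}}=\theta_0+\sum_{m=1}^M\alpha_mB_m$ satisfies $$\mathcal{L}_{\mathrm{tar}}(\theta^M_{\mathrm{Add}})\le\mathcal{L}_{\mathrm{tar}}(\theta_{\mathrm{tar}})+L_{\mathrm{tar}}C(1-\rho\gamma).$$
   Context: Norms and inner products are Euclidean. $\Delta^{K-1}=\{x\in\mathbb{R}^K: x\ge 0,\ \sum_k x_k=1\}$. The vectors $B_m$ are the basis vectors (convex combinations of task vectors) produced by a softmax-activated encoder with weight matrix $\mathbf{W}_e$. *)

From HB Require Import structures.
From mathcomp Require Import all_boot all_order all_algebra.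
From mathcomp Require Import all_classical all_reals all_analysis.
Set Implicit Arguments. Unset Strict Implicit. Unset Printing Implicit Defensive.
Import Order.TTheory GRing.Theory Num.Theory.
Import numFieldNormedType.Exports.
Local Open Scope ring_scope.

Definition dotv (R : realType) (d : nat) (u v : 'rV[R]_d) : R :=
  \sum_(i < d) u 0 i * v 0 i.

Definition enorm (R : realType) (d : nat) (u : 'rV[R]_d) : R :=
  Num.sqrt (dotv u u).

(* Gradient of f : R^d -> R at x: the vector of partial derivatives,
   i.e. the coordinates of the (Frechet) differential 'd f x on the
   standard basis.  (Meaningful when f is differentiable at x.) *)
Definition gradient (R : realType) (d : nat) (f : 'rV[R]_d -> R^o)
  (x : 'rV[R]_d) : 'rV[R]_d :=
  \row_(i < d) ('d f x (delta_mx 0 i : 'rV[R]_d) : R).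

Definition in_simplex (R : realType) (K : nat) (x : 'I_K -> R) : Prop :=
  (forall k, 0 <= x k) /\ \sum_(k < K) x k = 1.

From HB Require Import structures.
From mathcomp Require Import all_boot all_order all_algebra.
From mathcomp Require Import all_classical all_reals all_analysis.
From mathcomp Require Import lra.
Import Order.TTheory GRing.Theory Num.Theory.
Import numFieldNormedType.Exports.
Local Open Scope ring_scope.
Set Implicit Arguments. Unset Strict Implicit.

(* Choosing alpha as the indicator of m*, the merged model is theta_0 + B_{m*}.
   B_{m*} is a convex combination of task vectors, so |B_{m*}|^2 <= C, and it
   puts weight at least rho on tau_{i*}, so <tau_tar, B_{m*}> >= rho gamma C.
   Hence |B_{m*} - tau_tar|^2 <= 2C(1 - rho gamma) <= 4C, and the quadratic
   upper bound at the critical point theta_tar gives the claim. *)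

Section Dot.
Variables (R : realType) (d : nat).
Implicit Types (u v w : 'rV[R]_d).

Lemma dotvC u v : dotv u v = dotv v u.
Proof. by apply: eq_bigr => i _; rewrite mulrC. Qed.

Lemma dotvDl u v w : dotv (u + v) w = dotv u w + dotv v w.
Proof. by rewrite /dotv -big_split; apply: eq_bigr => i _; rewrite mxE mulrDl. Qed.

Lemma dotvNl u w : dotv (- u) w = - dotv u w.
Proof. by rewrite /dotv -sumrN; apply: eq_bigr => i _; rewrite mxE mulNr. Qed.

Lemma dotvZl a u v : dotv (a *: u) v = a * dotv u v.
Proof. by rewrite /dotv mulr_sumr; apply: eq_bigr => i _; rewrite mxE mulrA. Qed.

Lemma dotvZr a u v : dotv u (a *: v) = a * dotv u v.
Proof. by rewrite dotvC dotvZl dotvC. Qed.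

Lemma dotv0r u : dotv u 0 = 0.
Proof. by rewrite /dotv big1 // => i _; rewrite mxE mulr0. Qed.

Lemma dotv_ge0 u : 0 <= dotv u u.
Proof. by apply: sumr_ge0 => i _; rewrite -expr2 sqr_ge0. Qed.

Lemma dotv_suml (I : finType) (F : I -> 'rV[R]_d) v :
  dotv (\sum_j F j) v = \sum_j dotv (F j) v.
Proof.
rewrite /dotv; under eq_bigr do rewrite summxE mulr_suml.
by rewrite exchange_big.
Qed.

Lemma dotv_sumr (I : finType) (F : I -> 'rV[R]_d) u :
  dotv u (\sum_j F j) = \sum_j dotv u (F j).
Proof. by rewrite dotvC dotv_suml; apply: eq_bigr => j _; rewrite dotvC. Qed.

Lemma dotv_subsub u v : dotv (u - v) (u - v) = dotv u u - 2 * dotv u v + dotv v v.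
Proof.
rewrite !dotvDl !dotvNl ![dotv _ (u - v)]dotvC !dotvDl !dotvNl (dotvC v u).
lra.
Qed.

Lemma dotv_le_half_sum u v : 2 * dotv u v <= dotv u u + dotv v v.
Proof. have := dotv_ge0 (u - v); rewrite dotv_subsub; lra. Qed.

Lemma enorm_le_mul_sqrt k C u :
  0 <= k -> dotv u u <= k ^+ 2 * C -> enorm u <= k * Num.sqrt C.
Proof.
move=> k0 hu; rewrite -[k](@ger0_norm _ k) // -sqrtr_sqr -sqrtrM ?sqr_ge0 //.
exact: ler_wsqrtr.
Qed.

Section ConvexCombination.
Variables (I : finType) (w : I -> R) (v : I -> 'rV[R]_d).
Hypothesis w_ge0 : forall j, 0 <= w j.

Lemma dotv_convex_le C :
  \sum_j w j = 1 -> (forall j, dotv (v j) (v j) <= C) ->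
  dotv (\sum_j w j *: v j) (\sum_j w j *: v j) <= C.
Proof.
move=> w1 vC.
have -> : dotv (\sum_j w j *: v j) (\sum_j w j *: v j) =
          \sum_j \sum_k w j * w k * dotv (v j) (v k).
  rewrite dotv_suml; apply: eq_bigr => j _.
  rewrite dotvZl dotv_sumr mulr_sumr; apply: eq_bigr => k _.
  by rewrite dotvZr mulrA.
apply: (@le_trans _ _ (\sum_j \sum_k w j * w k * C)).
  apply: ler_sum => j _; apply: ler_sum => k _.
  apply: ler_wpM2l; first by rewrite mulr_ge0.
  have := dotv_le_half_sum (v j) (v k); have := vC j; have := vC k; lra.
under eq_bigr => j _ do under eq_bigr => k _ do rewrite mulrAC.
under eq_bigr do rewrite -mulr_sumr w1 mulr1.
by rewrite -mulr_suml w1 mul1r.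
Qed.

Lemma dotv_convex_ge u i :
  (forall j, 0 <= dotv u (v j)) -> w i * dotv u (v i) <= dotv u (\sum_j w j *: v j).
Proof.
move=> uv0; rewrite dotv_sumr (bigD1 i) //= dotvZr lerDl.
by apply: sumr_ge0 => j _; rewrite dotvZr mulr_ge0.
Qed.

End ConvexCombination.
End Dot.

Lemma simplex_indicator (R : realType) (K : nat) (k0 : 'I_K) :
  in_simplex (fun k => (k == k0)%:R : R).
Proof.
split=> [k|]; first by case: (k == k0).
by rewrite (bigD1 k0) //= eqxx big1 ?addr0 // => k /negbTE ->.
Qed.

Lemma quadratic_bound_at_critical (R : realType) (d : nat)
    (f : 'rV[R]_d -> R^o) (x0 : 'rV[R]_d) (L r : R) :
  gradient f x0 = 0 ->
  (forall theta, enorm (theta - x0) <= r ->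
     f theta - f x0 <= dotv (theta - x0) (gradient f x0)
                       + L / 2 * enorm (theta - x0) ^+ 2) ->
  forall x, enorm x <= r -> f (x0 + x) <= f x0 + L / 2 * dotv x x.
Proof.
move=> grad0 smooth x xr.
have := smooth (x0 + x); rewrite addrAC subrr add0r grad0 dotv0r add0r.
by rewrite /enorm sqr_sqrtr ?dotv_ge0 //; move/(_ xr); lra.
Qed.

Theorem mainTheorem6 (R : realType) (d T M : nat)
  (theta0 : 'rV[R]_d) (tau : 'I_T -> 'rV[R]_d) (tau_tar : 'rV[R]_d)
  (C : R) (Ltar_fun : 'rV[R]_d -> R^o) (Ltar gamma rho : R)
  (We : 'M[R]_(T, M)) (istar : 'I_T) (mstar : 'I_M) :
  0 < C ->
  (forall i, dotv (tau i) (tau i) <= C) ->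
  dotv tau_tar tau_tar <= C ->
  (forall theta, differentiable Ltar_fun theta) ->
  gradient Ltar_fun (theta0 + tau_tar) = 0 ->
  0 <= Ltar ->
  (forall theta, enorm (theta - (theta0 + tau_tar)) <= 2 * Num.sqrt C ->
     Ltar_fun theta - Ltar_fun (theta0 + tau_tar)
       <= dotv (theta - (theta0 + tau_tar)) (gradient Ltar_fun (theta0 + tau_tar))
          + Ltar / 2 * enorm (theta - (theta0 + tau_tar)) ^+ 2) ->
  (forall i, 0 <= dotv tau_tar (tau i)) ->
  (forall i, dotv tau_tar (tau i) <= dotv tau_tar (tau istar)) ->
  0 < gamma -> gamma <= 1 ->
  gamma * C <= dotv tau_tar (tau istar) ->
  (forall m, in_simplex (fun j => We j m)) ->
  0 < rho -> rho <= 1 ->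
  rho <= We istar mstar ->
  exists alpha : 'I_M -> R,
    in_simplex alpha /\
    Ltar_fun (theta0 + \sum_(m < M) alpha m *: (\sum_(j < T) We j m *: tau j))
      <= Ltar_fun (theta0 + tau_tar) + Ltar * C * (1 - rho * gamma).
Proof.
move=> C0 tauC tau_tarC _ grad0 L0 smooth tau_pos _ g0 g1 tau_istar We_simplex
  r0 r1 rW.
exists (fun m => (m == mstar)%:R); split; first exact: simplex_indicator.
have [W0 W1] := We_simplex mstar.
set B := \sum_(j < T) We j mstar *: tau j.
have -> : \sum_(m < M) (m == mstar)%:R *: (\sum_(j < T) We j m *: tau j) = B.
  rewrite (bigD1 mstar) //= eqxx scale1r [X in _ + X]big1 ?addr0 // => m /negbTE ->.
  by rewrite scale0r.
have BC : dotv B B <= C := dotv_convex_le W0 W1 tauC.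
have B_align : rho * gamma * C <= dotv tau_tar B.
  apply: le_trans (dotv_convex_ge W0 istar tau_pos).
  by rewrite -mulrA ler_pM // ?mulr_ge0 ?ltW.
have rg_le1 : rho * gamma <= 1 by rewrite -(mulr1 1) ler_pM // ltW.
have gap : dotv (B - tau_tar) (B - tau_tar) <= 2 * C * (1 - rho * gamma).
  by rewrite dotv_subsub (dotvC B); lra.
have gap_r : enorm (B - tau_tar) <= 2 * Num.sqrt C.
  apply: enorm_le_mul_sqrt => //; apply: le_trans gap _.
  have : 0 <= rho * gamma by rewrite mulr_ge0 // ltW.
  rewrite expr2; nra.
have := quadratic_bound_at_critical grad0 smooth gap_r.
have -> : theta0 + tau_tar + (B - tau_tar) = theta0 + B.
  by rewrite addrACA subrr addr0.
move=> bound; apply: le_trans bound _.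
have half_L : 0 <= Ltar / 2 by rewrite divr_ge0.
rewrite lerD2l; apply: le_trans (ler_wpM2l half_L gap) _.
by rewrite !mulrA mulfVK // pnatr_eq0.
Qed.
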